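(* Let $r\in\mathbb{R}$, $r\neq 0$. Then $\{r^k\}_{k=0}^{\infty}$ is a Legendre multiplier sequence if and only if $|r|=1$.
   Context: The Legendre polynomials $\mathfrak{Le}_n(x)$ are defined by $\frac{1}{\sqrt{1-2xt+t^2}}=\sum_{k=0}^{\infty}\mathfrak{Le}_k(x)t^k$. A real sequence $\{\gamma_k\}_{k=0}^{\infty}$ is a Legendre multiplier sequence if, for every $n$ and all real $a_0,\dots,a_n$, the polynomial $\sum_{k=0}^n a_k\gamma_k\mathfrak{Le}_k(x)$ has only real zeros whenever $\sum_{k=0}^n a_k\mathfrak{Le}_k(x)$ has only real zeros. *)

From mathcomp Require Import all_boot all_order all_algebra.
From mathcomp Require Import reals.
Set Implicit Arguments. Unset Strict Implicit. Unset Printing Implicit Defensive.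
Import Order.TTheory GRing.Theory Num.Theory.
Local Open Scope ring_scope.

(* Legendre polynomial Le_n: the coefficient of t^n in the expansion of
   (1 - 2 x t + t^2)^(-1/2). *)
Definition legendre (R : realType) (n : nat) : {poly R} :=
  (2%:R ^- n) *: \sum_(k < n./2.+1)
     (((-1) ^+ k * ('C(n, k) * 'C(2 * n - 2 * k, n))%:R) *: 'X^(n - 2 * k)).

(* A real polynomial has only real zeros: it factors into linear factors
   over R, i.e. all its (complex) zeros are real. *)
Definition only_real_zeros (R : realType) (p : {poly R}) : Prop :=
  exists s : seq R, p = lead_coef p *: \prod_(x <- s) ('X - x%:P).

Definition legendre_multiplier_sequence (R : realType) (g : nat -> R) : Prop :=
  forall (n : nat) (a : nat -> R),
    only_real_zeros (\sum_(k < n.+1) a k *: legendre R k) ->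
    only_real_zeros (\sum_(k < n.+1) (a k * g k) *: legendre R k).

From mathcomp Require Import all_boot all_order all_algebra.
From mathcomp Require Import reals.
From mathcomp Require Import ring lra.

Set Implicit Arguments.
Unset Strict Implicit.
Unset Printing Implicit Defensive.

Import Order.TTheory GRing.Theory Num.Theory.
Local Open Scope ring_scope.

(* Sufficiency: multiplying by [(-1)^k] turns [p] into [p(-x)], since [Le_k] has
   the parity of [k], and reflection preserves real-rootedness.  Necessity:
   [(x - r)^3] has only real zeros, but after multiplying its Legendre
   coefficients by [r^k] one obtains a cubic whose discriminant is
   [-108/125 r^6 (r^2 - 1)^2 (4 r^2 + 1)], negative unless [r^2 = 1]; a real
   cubic with only real zeros has nonnegative discriminant. *)

Section Cubic.
Variable R : comNzRingType.

Definition cubic (c0 c1 c2 c3 : R) : {poly R} :=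
  c3 *: 'X^3 + c2 *: 'X^2 + c1 *: 'X + c0%:P.

Definition cubic_disc (c0 c1 c2 c3 : R) : R :=
  c2 ^+ 2 * c1 ^+ 2 - 4 * c3 * c1 ^+ 3 - 4 * c2 ^+ 3 * c0
  - 27 * c3 ^+ 2 * c0 ^+ 2 + 18 * c3 * c2 * c1 * c0.

Lemma coef_cubic c0 c1 c2 c3 i :
  (cubic c0 c1 c2 c3)`_i = [:: c0; c1; c2; c3]`_i.
Proof.
rewrite /cubic !coefE.
by case: i => [|[|[|[|i]]]] /=; rewrite ?mulr0 ?mulr1 ?addr0 ?add0r ?nth_nil.
Qed.

Lemma cubic_inj a0 a1 a2 a3 b0 b1 b2 b3 :
  cubic a0 a1 a2 a3 = cubic b0 b1 b2 b3 ->
  [/\ a0 = b0, a1 = b1, a2 = b2 & a3 = b3].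
Proof.
move=> E; have coef_eq i := congr1 (fun p : {poly R} => p`_i) E.
by move: (coef_eq 0%N) (coef_eq 1%N) (coef_eq 2%N) (coef_eq 3%N); rewrite /= !coef_cubic.
Qed.

Lemma size_cubic c0 c1 c2 c3 : c3 != 0 -> size (cubic c0 c1 c2 c3) = 4%N.
Proof.
move=> c3_neq0; apply/eqP; rewrite eqn_leq; apply/andP; split.
  apply/leq_sizeP => j; rewrite coef_cubic.
  by case: j => [|[|[|[|j]]]] //= _; rewrite nth_nil.
by rewrite ltnNge; apply/negP => /leq_sizeP/(_ 3%N (leqnn _)); rewrite coef_cubic; apply/eqP.
Qed.

Lemma lead_coef_cubic c0 c1 c2 c3 : c3 != 0 -> lead_coef (cubic c0 c1 c2 c3) = c3.
Proof. by move=> c3_neq0; rewrite lead_coefE size_cubic // coef_cubic. Qed.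

Lemma scale_cubic c a0 a1 a2 a3 :
  c *: cubic a0 a1 a2 a3 = cubic (c * a0) (c * a1) (c * a2) (c * a3).
Proof.
apply/polyP => i; rewrite coefZ !coef_cubic.
by case: i => [|[|[|[|i]]]] //=; rewrite nth_nil mulr0.
Qed.

Lemma prod3_XsubC x1 x2 x3 :
  \prod_(x <- [:: x1; x2; x3]) ('X - x%:P) =
  cubic (- (x1 * x2 * x3)) (x1 * x2 + x1 * x3 + x2 * x3) (- (x1 + x2 + x3)) 1.
Proof.
rewrite !big_cons big_nil /cubic -!mul_polyC !rmorphN !rmorphD !rmorphM rmorph1.
ring.
Qed.

End Cubic.

Section RealZeros.
Variable R : realType.

Lemma only_real_zeros_scale_prod (c : R) (s : seq R) :
  only_real_zeros (c *: \prod_(x <- s) ('X - x%:P)).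
Proof.
by exists s; rewrite lead_coefZ (monicP (monic_prod_XsubC _ _ _)) mulr1.
Qed.

Lemma comp_opp_prod_XsubC (s : seq R) :
  (\prod_(x <- s) ('X - x%:P)) \Po (- 'X) =
  (-1) ^+ size s *: \prod_(x <- map -%R s) ('X - x%:P).
Proof.
elim: s => [|x s IH]; first by rewrite !big_nil comp_polyC scale1r.
rewrite !big_cons comp_polyM IH comp_polyB comp_polyX comp_polyC exprS.
have -> : - 'X - x%:P = - ('X - (- x)%:P) by rewrite polyCN opprB addrC.
by rewrite -scalerA scaleN1r mulNr -scalerAr.
Qed.

Lemma only_real_zeros_comp_opp (p : {poly R}) :
  only_real_zeros p -> only_real_zeros (p \Po (- 'X)).
Proof.
case=> s ->; rewrite comp_polyZ comp_opp_prod_XsubC scalerA.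
exact: only_real_zeros_scale_prod.
Qed.

(* The discriminant is [c3^4] times the squared Vandermonde of the roots. *)
Lemma cubic_disc_ge0 (c0 c1 c2 c3 : R) : c3 != 0 ->
  only_real_zeros (cubic c0 c1 c2 c3) -> 0 <= cubic_disc c0 c1 c2 c3.
Proof.
move=> c3_neq0 [s]; rewrite lead_coef_cubic // => Es.
have : size s = 3%N.
  have := size_cubic c0 c1 c2 c3_neq0.
  by rewrite Es size_scale // size_prod_XsubC => -[].
case: s Es => [|x1 [|x2 [|x3 [|]]]] // + _.
rewrite prod3_XsubC scale_cubic => /cubic_inj[-> -> -> _].
rewrite (_ : cubic_disc _ _ _ _ =
  (c3 ^+ 2 * ((x1 - x2) * (x1 - x3) * (x2 - x3))) ^+ 2) ?sqr_ge0 //.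
by rewrite /cubic_disc; ring.
Qed.

End RealZeros.

Section Legendre.
Variable R : realType.

Lemma legendre0 : legendre R 0 = cubic 1 0 0 0.
Proof.
apply/polyP => i; rewrite coef_cubic /legendre !big_ord_recr big_ord0 /= !coefE.
rewrite (_ : ('C(0, 0) * 'C(2 * 0 - 2 * 0, 0))%N = 1%N) //.
by case: i => [|[|[|[|i]]]] /=; rewrite ?nth_nil; field.
Qed.

Lemma legendre1 : legendre R 1 = cubic 0 1 0 0.
Proof.
apply/polyP => i; rewrite coef_cubic /legendre !big_ord_recr big_ord0 /= !coefE.
rewrite (_ : ('C(1, 0) * 'C(2 * 1 - 2 * 0, 1))%N = 2%N) //.
by case: i => [|[|[|[|i]]]] /=; rewrite ?nth_nil; field.
Qed.

Lemma legendre2 : legendre R 2 = cubic (- (1 / 2)) 0 (3 / 2) 0.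
Proof.
apply/polyP => i; rewrite coef_cubic /legendre !big_ord_recr big_ord0 /= !coefE.
rewrite (_ : ('C(2, 0) * 'C(2 * 2 - 2 * 0, 2))%N = 6%N) //.
rewrite (_ : ('C(2, 1) * 'C(2 * 2 - 2 * 1, 2))%N = 2%N) //.
by case: i => [|[|[|[|i]]]] /=; rewrite ?nth_nil; field.
Qed.

Lemma legendre3 : legendre R 3 = cubic 0 (- (3 / 2)) 0 (5 / 2).
Proof.
apply/polyP => i; rewrite coef_cubic /legendre !big_ord_recr big_ord0 /= !coefE.
rewrite (_ : ('C(3, 0) * 'C(2 * 3 - 2 * 0, 3))%N = 20%N) //.
rewrite (_ : ('C(3, 1) * 'C(2 * 3 - 2 * 1, 3))%N = 12%N) //.
by case: i => [|[|[|[|i]]]] /=; rewrite ?nth_nil; field.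
Qed.

Lemma legendre_sum4 (b : nat -> R) :
  \sum_(k < 4) b k *: legendre R k =
  cubic (b 0%N - b 2%N / 2) (b 1%N - 3 / 2 * b 3%N) (3 / 2 * b 2%N) (5 / 2 * b 3%N).
Proof.
rewrite !big_ord_recr big_ord0 /= add0r legendre0 legendre1 legendre2 legendre3.
apply/polyP => i; rewrite [in RHS]coef_cubic !coefD !coefZ !coef_cubic.
by case: i => [|[|[|[|i]]]] /=; rewrite ?nth_nil; field.
Qed.

Lemma legendre_comp_opp k : legendre R k \Po (- 'X) = (-1) ^+ k *: legendre R k.
Proof.
rewrite /legendre comp_polyZ linear_sum /= scalerA mulrC -scalerA.
congr (_ *: _); rewrite scaler_sumr; apply: eq_bigr => j _.
rewrite comp_polyZ comp_Xn_poly -scaleN1r exprZn !scalerA [in LHS]mulrC.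
congr (_ * _ *: _).
have j2_le_k : (2 * j <= k)%N by rewrite mul2n -geq_half_double -ltnS.
by rewrite -[LHS]signr_odd oddB // oddM addbF signr_odd.
Qed.

Lemma legendre_sum_sign (n : nat) (a : nat -> R) :
  \sum_(k < n.+1) (a k * (-1) ^+ k) *: legendre R k =
  (\sum_(k < n.+1) a k *: legendre R k) \Po (- 'X).
Proof.
rewrite linear_sum /=; apply: eq_bigr => k _.
by rewrite comp_polyZ legendre_comp_opp -scalerA.
Qed.

Definition cube_legendre_coef (r : R) (k : nat) : R :=
  match k with
  | 0 => - r - r ^+ 3
  | 1 => 3 / 5 + 3 * r ^+ 2
  | 2 => - 2 * r
  | 3 => 2 / 5
  | _ => 0
  end.

Lemma cube_legendre_coefE (r : R) :
  \sum_(k < 4) cube_legendre_coef r k *: legendre R k =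
  1 *: \prod_(x <- [:: r; r; r]) ('X - x%:P).
Proof.
by rewrite scale1r prod3_XsubC legendre_sum4 /=; congr cubic; field.
Qed.

Lemma cube_legendre_coef_scaled_disc (r : R) :
  cubic_disc (- r) (12 / 5 * r ^+ 3 + 3 / 5 * r) (- 3 * r ^+ 3) (r ^+ 3) =
  - (108 / 125) * (r ^+ 6 * (r ^+ 2 - 1) ^+ 2 * (4 * r ^+ 2 + 1)).
Proof. by rewrite /cubic_disc; field. Qed.

Lemma not_legendre_multiplier_geometric (r : R) : r != 0 -> r ^+ 2 != 1 ->
  ~ legendre_multiplier_sequence (fun k => r ^+ k).
Proof.
move=> r_neq0 r2_neq1 /(_ 3%N (cube_legendre_coef r)).
rewrite cube_legendre_coefE => /(_ (only_real_zeros_scale_prod _ _)).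
rewrite (legendre_sum4 (fun k => cube_legendre_coef r k * r ^+ k)) /=.
rewrite (_ : cubic _ _ _ _ =
    cubic (- r) (12 / 5 * r ^+ 3 + 3 / 5 * r) (- 3 * r ^+ 3) (r ^+ 3)); last first.
  by congr cubic; field.
move/cubic_disc_ge0; rewrite expf_neq0 // cube_legendre_coef_scaled_disc => /(_ isT).
have r6_gt0 : 0 < r ^+ 6 by rewrite exprn_even_gt0.
have sq_gt0 : 0 < (r ^+ 2 - 1) ^+ 2 by rewrite exprn_even_gt0 // subr_eq0.
have lin_gt0 : 0 < 4 * r ^+ 2 + 1 by have := sqr_ge0 r; lra.
have := mulr_gt0 (mulr_gt0 r6_gt0 sq_gt0) lin_gt0.
lra.
Qed.

End Legendre.

Theorem theorem4p11 (R : realType) (r : R) (hr : r != 0) :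
  legendre_multiplier_sequence (fun k : nat => r ^+ k) <-> `|r| = 1.
Proof.
split=> [lms | /eqP].
  apply/eqP; rewrite -sqr_norm_eq1; apply/negPn/negP => r2_neq1.
  exact: (not_legendre_multiplier_geometric hr r2_neq1).
rewrite eqr_norml ler01 andbT => /orP[] /eqP -> n a real_zeros.
  by under eq_bigr do rewrite expr1n mulr1.
by rewrite legendre_sum_sign; apply: only_real_zeros_comp_opp.
Qed.
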